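(* Let $A$ be a finite set of options and let $\mathcal{L}$ be the set of all Llull matrices on $A$, viewed as a subset of a finite-dimensional real space. For $v\in\mathcal{L}$ let $T(v)\subseteq A$ be the set of path-top choices of $v$. Then $T$ is upper semicontinuous on $\mathcal{L}$: every $v\in\mathcal{L}$ has a neighbourhood $U$ such that $T(w)\subseteq T(v)$ for every $w\in U\cap\mathcal{L}$.
   Context: A Llull matrix on $A$ is a family of real numbers $v_{xy}\in[0,1]$, indexed by ordered pairs $(x,y)$ of distinct elements of $A$, with $v_{xy}+v_{yx}\le1$. Path scores: $v^*_{xy}=\max\min(v_{x_0x_1},\dots,v_{x_{m-1}x_m})$ over all paths $x_0\dots x_m$ ($m\ge1$, $x_0=x$, $x_m=y$, $x_i$ pairwise distinct). Ranking relation: $x\succeq y$ iff there is a path $x_0\dots x_m$ from $x$ to $y$ with $v^*_{x_ix_{i+1}}\ge v^*_{x_{i+1}x_i}$ for all $i<m$. An option $x$ is a path-top choice of $v$ if $x\succeq y$ for all $y\ne x$. *)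

From HB Require Import structures.
From mathcomp Require Import all_boot all_order all_algebra.
From mathcomp Require Import reals.
Set Implicit Arguments. Unset Strict Implicit. Unset Printing Implicit Defensive.
Import Order.TTheory GRing.Theory Num.Theory.
Local Open Scope ring_scope.

Section Llull.
Variables (R : realType) (A : finType).

(* A matrix is a function on ordered pairs; only the entries v x y with
   x != y are meaningful (diagonal entries are ignored everywhere). *)
Definition llull (v : A -> A -> R) : Prop :=
  forall x y : A, x != y ->
    [/\ 0 <= v x y, v x y <= 1 & v x y + v y x <= 1].

Fixpoint pathmin (v : A -> A -> R) (x : A) (s : seq A) : R :=
  if s is y :: s' then Num.min (v x y) (pathmin v y s') else 1.

Definition simple_path (x y : A) (s : seq A) : bool :=
  [&& s != [::], uniq (x :: s) & last x s == y].

(* v*_{xy}: maximum over all simple paths from x to y of the minimal edge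
   value. Simple paths have at most #|A| - 1 edges, so we enumerate tails
   s of length n < #|A|. *)
Definition vstar (v : A -> A -> R) (x y : A) : R :=
  \big[Num.max/0]_(n < #|A|)
    \big[Num.max/0]_(s : n.-tuple A | simple_path x y s) pathmin v x s.

Definition ranks (v : A -> A -> R) (x y : A) : Prop :=
  exists s : seq A, simple_path x y s /\
    path (fun a b => vstar v b a <= vstar v a b) x s.

Definition path_top (v : A -> A -> R) (x : A) : Prop :=
  forall y : A, y != x -> ranks v x y.

End Llull.

From HB Require Import structures.
From mathcomp Require Import all_boot all_order all_algebra.
From mathcomp Require Import reals.
From mathcomp Require Import lra.
Import Order.TTheory GRing.Theory Num.Theory.
Local Open Scope ring_scope.

(* A minimum of entries and a maximum of minima move by at most the largest
   entry perturbation, so v* is 1-Lipschitz for the sup distance on matrices.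
   Hence a strict comparison v*_ba > v*_ab survives every perturbation smaller
   than half its gap.  Taking eps below half the smallest such gap, every edge
   a -> b admissible for w (v*_ba <= v*_ab computed in w) is admissible for v,
   so each path witnessing x ⪰ y for w also witnesses it for v. *)

Lemma le_minD (R : realDomainType) (a b c d e : R) :
  a <= c + e -> b <= d + e -> Num.min a b <= Num.min c d + e.
Proof.
move=> le_ac le_bd; case: (lerP c d) => _; first by rewrite ge_min le_ac.
by rewrite ge_min le_bd orbT.
Qed.

Lemma bigmax_leD (R : realDomainType) (I : finType) (P : pred I)
    (F G : I -> R) (e : R) :
  0 <= e -> (forall i, P i -> F i <= G i + e) ->
  \big[Num.max/0]_(i | P i) F i <= \big[Num.max/0]_(i | P i) G i + e.
Proof.
move=> e_ge0 le_FG.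
apply: (big_ind2 (fun a b => a <= b + e)) => //; first by rewrite add0r.
move=> a1 a2 b1 b2 le_ab1 le_ab2; rewrite ge_max.
apply/andP; split; [apply: le_trans le_ab1 _ | apply: le_trans le_ab2 _];
  by rewrite lerD2r le_max lexx ?orbT.
Qed.

Lemma exists_pos_lower_bound (R : realDomainType) (I : finType) (P : pred I)
    (F : I -> R) :
  (forall i, P i -> 0 < F i) ->
  exists2 e : R, 0 < e & forall i, P i -> e <= F i.
Proof.
move=> F_gt0; exists (\big[Num.min/1]_(i | P i) F i).
  apply: (big_ind (fun a => 0 < a)) => // a b a_gt0 b_gt0.
  by rewrite lt_min a_gt0.
by move=> i Pi; rewrite (bigD1 i) //= ge_min lexx.
Qed.

Section Perturbation.
Variables (R : realType) (A : finType) (v w : A -> A -> R) (e : R).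
Hypotheses (e_ge0 : 0 <= e) (le_wv : forall x y, x != y -> w x y <= v x y + e).

Lemma pathmin_leD (s : seq A) (x : A) :
  uniq (x :: s) -> pathmin w x s <= pathmin v x s + e.
Proof.
elim: s x => [|y s IHs] x /=; first by rewrite lerDl.
rewrite inE negb_or => /andP[/andP[xy _] uniq_ys].
by apply: le_minD; [apply: le_wv | apply: IHs].
Qed.

Lemma vstar_leD (a b : A) : vstar w a b <= vstar v a b + e.
Proof.
apply: bigmax_leD => // n _; apply: bigmax_leD => // s /and3P[_ uniq_s _].
exact: pathmin_leD.
Qed.

End Perturbation.

Lemma vstar_lt_stable (R : realType) (A : finType) (v w : A -> A -> R)
    (e : R) (a b : A) :
  0 <= e -> (forall x y, x != y -> `|w x y - v x y| <= e) ->
  vstar v a b + e *+ 2 < vstar v b a -> vstar w a b < vstar w b a.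
Proof.
move=> e_ge0 near_wv gap_ab.
have le_wv x y : x != y -> w x y <= v x y + e.
  by move=> /near_wv; rewrite ler_norml => /andP[_]; lra.
have le_vw x y : x != y -> v x y <= w x y + e.
  by move=> /near_wv; rewrite ler_norml => /andP[]; lra.
have := @vstar_leD R A v w e e_ge0 le_wv a b.
have := @vstar_leD R A w v e e_ge0 le_vw b a.
rewrite mulr2n in gap_ab; lra.
Qed.

Theorem proposition2p4 (R : realType) (A : finType) (v : A -> A -> R) :
  llull v ->
  exists2 eps : R, 0 < eps &
    forall w : A -> A -> R, llull w ->
      (forall x y : A, x != y -> `|w x y - v x y| < eps) ->
      forall x : A, path_top w x -> path_top v x.
Proof.
move=> _.
have [g g_gt0 le_gap] := @exists_pos_lower_bound R (A * A)%type
  (fun p => vstar v p.1 p.2 < vstar v p.2 p.1)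
  (fun p => vstar v p.2 p.1 - vstar v p.1 p.2)
  (fun p => ltac:(by rewrite subr_gt0)).
exists (g / 3); first lra.
move=> w _ near_wv x top_w y yx; have [s [simple_s path_s]] := top_w y yx.
exists s; split=> //; apply: sub_path path_s => a b /= le_w.
rewrite leNgt; apply/negP => lt_v.
have := le_gap (a, b) lt_v => /= gap_ab.
have lt_w : vstar w a b < vstar w b a.
  apply: (@vstar_lt_stable R A v w (g / 3)); first lra.
    by move=> p q /near_wv/ltW.
  lra.
by rewrite leNgt lt_w in le_w.
Qed.
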